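(* If $p$ is prime, then $f_p$ is not oblivious to $p$; that is, for every asynchronous binary transducer for $f_p$, every accessible cycle has length a multiple of $p$.
   Context: An asynchronous binary transducer is $(S,s_0,t,o)$ with $S$ finite, $s_0\in S$, $t\colon S\times\{0,1\}\to S$, $o\colon S\times\{0,1\}\to\{0,1\}^*$; $t$ and $o$ extend to words: for $s\in S$ and $\sigma_1\sigma_2\cdots$ let $s_1=s$, $s_{n+1}=t(s_n,\sigma_n)$, $t(s,\sigma_1\cdots\sigma_n)=s_{n+1}$, $o(s,\sigma_1\sigma_2\cdots)=o(s_1,\sigma_1)o(s_2,\sigma_2)\cdots$. It is a transducer for a homeomorphism $f$ of $\{0,1\}^\omega$ if $f(\psi)=o(s_0,\psi)$ for all $\psi$. A state $s$ is accessible if $s=t(s_0,\alpha)$ for some finite word $\alpha$. A cycle is a pair $(c,\gamma)$ with $c\in S$ and $\gamma$ a nonempty finite word with $t(c,\gamma)=c$; its length is $|\gamma|$; it is accessible if $c$ is. A transducer is oblivious to $p$ if it has an accessible cycle whose length is not a multiple of $p$; a rational homeomorphism is oblivious to $p$ if some transducer for it is. $f_p$ is the homeomorphism switching the digits in positions $p,2p,3p,\ldots$ of a binary sequence and leaving other digits unchanged. *)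

From mathcomp Require Import all_boot.
Unset Printing Implicit Defensive.

(* Infinite binary sequences {0,1}^omega are functions nat -> bool (0-indexed;
   psi i is the (i+1)-th digit). Finite words are seq bool. *)

Record transducer := Transducer {
  tstate : finType;
  s0 : tstate;
  tr : tstate -> bool -> tstate;
  out : tstate -> bool -> seq bool }.

Definition tr_word (T : transducer) (s : tstate T) (w : seq bool) : tstate T :=
  foldl (@tr T) s w.

(* the state s_{n+1} reached after reading the first n letters of psi *)
Fixpoint state_at (T : transducer) (s : tstate T) (psi : nat -> bool) (n : nat)
  : tstate T :=
  match n with
  | 0 => s
  | n'.+1 => @tr T (state_at T s psi n') (psi n')
  end.

Fixpoint out_prefix (T : transducer) (s : tstate T) (psi : nat -> bool) (n : nat)
  : seq bool :=
  match n with
  | 0 => [::]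
  | n'.+1 => out_prefix T s psi n' ++ @out T (state_at T s psi n') (psi n')
  end.

(* the infinite word o(s, psi) equals phi: all finite partial outputs are
   prefixes of phi, and their lengths are unbounded (so the concatenation
   is an infinite word). *)
Definition out_inf_eq (T : transducer) (s : tstate T) (psi phi : nat -> bool) :=
  (forall n i, i < size (out_prefix T s psi n) ->
      nth false (out_prefix T s psi n) i = phi i) /\
  (forall m, exists n, m <= size (out_prefix T s psi n)).

Definition is_transducer_for (T : transducer) (f : (nat -> bool) -> (nat -> bool)) :=
  forall psi, out_inf_eq T (@s0 T) psi (f psi).

Definition accessible (T : transducer) (s : tstate T) :=
  exists alpha : seq bool, s = tr_word T (@s0 T) alpha.

Definition is_cycle (T : transducer) (c : tstate T) (gamma : seq bool) :=
  gamma != [::] /\ tr_word T c gamma = c.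

Definition oblivious_transducer (T : transducer) (p : nat) :=
  exists (c : tstate T) (gamma : seq bool),
    accessible T c /\ is_cycle T c gamma /\ ~~ (p %| size gamma).

(* f_p switches digits in positions p, 2p, 3p, ... (1-indexed) *)
Definition f_ (p : nat) (psi : nat -> bool) : nat -> bool :=
  fun i => if p %| i.+1 then ~~ psi i else psi i.

Definition oblivious (f : (nat -> bool) -> (nat -> bool)) (p : nat) :=
  exists T : transducer, is_transducer_for T f /\ oblivious_transducer T p.

From mathcomp Require Import all_boot.
From mathcomp Require Import zify.

Set Implicit Arguments.
Unset Strict Implicit.

(* Two input words u0 and u1 leading a transducer for f_p to the same state are
   followed by the same output, so f_p(u0 psi) shifted by the length L0 of the
   output on u0 coincides with f_p(u1 psi) shifted by L1, for every psi.  Far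
   to the right, f_p(u psi) is psi shifted by |u| and xor-ed with the flip
   pattern of period p.  Perturbing one digit of psi shows that both shifts
   read psi at the same place, L0 + |u1| = L1 + |u0|; the flip pattern shows
   L0 = L1 (mod p).  Hence |u0| = |u1| (mod p), and a cycle gamma reached by
   alpha gives |alpha| = |alpha gamma| (mod p). *)

Fixpoint prepend (u : seq bool) (psi : nat -> bool) : nat -> bool :=
  if u is b :: u' then fun i => if i is i'.+1 then prepend u' psi i' else b
  else psi.

Lemma prepend_tail u psi i : size u <= i -> prepend u psi i = psi (i - size u).
Proof. by elim: u i => [|b u IH] [|i] //= /IH. Qed.

Fixpoint out_word (T : transducer) (s : tstate T) (w : seq bool) : seq bool :=
  if w is b :: w' then out T s b ++ out_word (tr T s b) w' else [::].

Section OutputPrefixes.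

Variable T : transducer.

Lemma state_at_succ (s : tstate T) psi n :
  state_at T s psi n.+1 = state_at T (tr T s (psi 0)) (fun i => psi i.+1) n.
Proof.
elim: n => [|n IH] //.
by rewrite -[LHS]/(tr T (state_at T s psi n.+1) (psi n.+1)) IH.
Qed.

Lemma out_prefix_succ (s : tstate T) psi n :
  out_prefix T s psi n.+1 =
  out T s (psi 0) ++ out_prefix T (tr T s (psi 0)) (fun i => psi i.+1) n.
Proof.
elim: n => [|n IH]; first by rewrite /= cats0.
rewrite -[LHS]/(out_prefix T s psi n.+1 ++ out T (state_at T s psi n.+1) (psi n.+1)).
by rewrite IH state_at_succ catA.
Qed.

Lemma out_prefix_prepend (s : tstate T) u psi m :
  out_prefix T s (prepend u psi) (size u + m) =
  out_word s u ++ out_prefix T (tr_word T s u) psi m.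
Proof. by elim: u s => [|b u IH] s //; rewrite addSn out_prefix_succ IH catA. Qed.

Lemma size_out_prefix_homo (s : tstate T) psi :
  {homo (fun n => size (out_prefix T s psi n)) : m n / m <= n}.
Proof.
by apply: homo_leq => [//|n m k|n]; [exact: leq_trans | rewrite /= size_cat leq_addr].
Qed.

Variable f : (nat -> bool) -> nat -> bool.
Hypothesis Tf : is_transducer_for T f.

Lemma out_prefix_unbounded u psi M :
  exists m, M <= size (out_prefix T (tr_word T (s0 T) u) psi m).
Proof.
have [_ /(_ (size (out_word (s0 T) u) + M)) [n Hn]] := Tf (prepend u psi).
exists n; have := size_out_prefix_homo (s0 T) (prepend u psi) (leq_addl (size u) n).
rewrite out_prefix_prepend size_cat; lia.
Qed.

Lemma nth_out_prefix_reached u psi m j :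
  j < size (out_prefix T (tr_word T (s0 T) u) psi m) ->
  nth false (out_prefix T (tr_word T (s0 T) u) psi m) j =
  f (prepend u psi) (size (out_word (s0 T) u) + j).
Proof.
move=> Hj; have [Hnth _] := Tf (prepend u psi).
rewrite -(Hnth (size u + m)); last by rewrite out_prefix_prepend size_cat ltn_add2l.
by rewrite out_prefix_prepend nth_cat ltnNge leq_addr /= addKn.
Qed.

Lemma same_state_output_shift u0 u1 :
  tr_word T (s0 T) u0 = tr_word T (s0 T) u1 ->
  forall psi j, f (prepend u0 psi) (size (out_word (s0 T) u0) + j) =
                f (prepend u1 psi) (size (out_word (s0 T) u1) + j).
Proof.
move=> same psi j; have [m Hm] := out_prefix_unbounded u0 psi j.+1.
by rewrite -(nth_out_prefix_reached Hm) same nth_out_prefix_reached // -same.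
Qed.

End OutputPrefixes.

Lemma f_prepend_tail p u psi i : size u <= i ->
  f_ p (prepend u psi) i = (p %| i.+1) (+) psi (i - size u).
Proof. by move=> Hi; rewrite /f_ prepend_tail //; case: (p %| i.+1). Qed.

Section ShiftedFlips.

Variables (p L0 L1 : nat) (u0 u1 : seq bool).
Hypothesis shift : forall psi j,
  f_ p (prepend u0 psi) (L0 + j) = f_ p (prepend u1 psi) (L1 + j).

Lemma f_shift_far_dvdn j : size u0 + size u1 <= j ->
  (p %| (L0 + j).+1) = (p %| (L1 + j).+1).
Proof.
move=> Hj; have := shift (fun=> false) j.
by rewrite !f_prepend_tail ?addbF //; lia.
Qed.

Lemma f_shift_offset : L0 + size u1 = L1 + size u0.
Proof.
set j := size u0 + size u1; set x := L0 + j - size u0.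
have := shift (pred1 x) j.
rewrite !f_prepend_tail ?f_shift_far_dvdn /= ?eqxx => [/addbI/esym/eqP| | |]; lia.
Qed.

Lemma f_shift_mod : 0 < p -> L0 = L1 %[mod p].
Proof.
move=> p_gt0; set K := size u0 + size u1 + L0.+1.
have leKpK : K <= p * K by rewrite leq_pmull.
set j := p * K - L0.+1.
have Hj : (L0 + j).+1 = p * K by rewrite /j; lia.
have far : size u0 + size u1 <= j by lia.
have := f_shift_far_dvdn far; rewrite Hj dvdn_mulr // => /esym /eqP Hd.
by apply/eqP; rewrite -(eqn_modDr j.+1) !addnS Hj modnMr Hd.
Qed.

End ShiftedFlips.

Section TransducerForFlips.

Variables (p : nat) (T : transducer).
Hypotheses (p_gt0 : 0 < p) (Tf : is_transducer_for T (f_ p)).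

Lemma same_state_size_mod u0 u1 :
  tr_word T (s0 T) u0 = tr_word T (s0 T) u1 -> size u0 = size u1 %[mod p].
Proof.
move=> /(same_state_output_shift Tf) shift; apply/eqP.
rewrite -(eqn_modDl (size (out_word (s0 T) u1))) -(f_shift_offset shift) eqn_modDr.
exact/eqP/(f_shift_mod shift p_gt0).
Qed.

Lemma accessible_cycle_dvdn c gamma :
  accessible T c -> tr_word T c gamma = c -> p %| size gamma.
Proof.
move=> [alpha ->] cyc.
have /same_state_size_mod : tr_word T (s0 T) alpha = tr_word T (s0 T) (alpha ++ gamma).
  by rewrite /tr_word foldl_cat.
by rewrite size_cat -[X in X = _ %[mod _]]addn0 => /eqP; rewrite eqn_modDl mod0n eq_sym.
Qed.

End TransducerForFlips.

Theorem lemma3p3 (p : nat) : prime p ->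
  ~ oblivious (f_ p) p /\
  (forall T : transducer, is_transducer_for T (f_ p) ->
     forall (c : tstate T) (gamma : seq bool),
       accessible T c -> is_cycle T c gamma -> p %| size gamma).
Proof.
move=> /prime_gt0 p_gt0.
have cycle_dvdn T (Tf : is_transducer_for T (f_ p)) c gamma :
    accessible T c -> is_cycle T c gamma -> p %| size gamma.
  by move=> acc [_]; exact: accessible_cycle_dvdn.
split=> // -[T [Tf [c [gamma [acc [cyc ndvd]]]]]].
by rewrite (cycle_dvdn T Tf c gamma acc cyc) in ndvd.
Qed.
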